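(* Let $p>0$ and let $u\in\mathcal{L}(\ell_p;\ell_p)$ with $u\neq0$. Let $(\mathbb{N}_k)_{k=1}^\infty$ be a partition of $\mathbb{N}$ into infinite pairwise disjoint subsets, $\mathbb{N}_k=\{n^{(k)}_1<n^{(k)}_2<\cdots\}$, and for each $k$ define $u_k\in\mathcal{L}(\ell_p;\ell_p)$ by $u_k(x)_{n^{(k)}_i}=u(x)_i$ for all $i\in\mathbb{N}$ and $u_k(x)_m=0$ for $m\notin\mathbb{N}_k$. Then the map $T:\ell_p\to\mathcal{L}(\ell_p;\ell_p)$ given by $T((a_k)_{k=1}^\infty)=\sum_{k=1}^\infty a_k u_k$ is well defined, linear and injective.
   Context: For $0<p<1$, $\ell_p$ is the $p$-Banach space of scalar sequences with $\|x\|_p=(\sum_k|x_k|^p)^{1/p}<\infty$; for $p\ge1$ it is the usual Banach space. $\mathcal{L}(\ell_p;\ell_p)$ is the space of bounded linear operators on $\ell_p$ with the operator (quasi-)norm, and the series defining $T$ is understood as convergent in this (quasi-)norm. *)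

From HB Require Import structures.
From mathcomp Require Import all_boot all_order all_algebra.
From mathcomp Require Import all_classical all_reals all_analysis.
Set Implicit Arguments. Unset Strict Implicit. Unset Printing Implicit Defensive.
Import Order.TTheory GRing.Theory Num.Theory.
Import numFieldNormedType.Exports.
Local Open Scope classical_set_scope.
Local Open Scope ring_scope.

Section Lp.
Variable R : realType.

(* x belongs to ell_p : sum_k |x_k|^p < oo (nonnegative terms, so
   convergence of the partial sums) *)
Definition in_lp (p : R) (x : nat -> R) : Prop :=
  cvgn (series (fun k => `|x k| `^ p)).

Definition lpnorm (p : R) (x : nat -> R) : R :=
  (limn (series (fun k => `|x k| `^ p))) `^ (p^-1).

(* u is a bounded linear operator on ell_p (only its values on ell_p matter) *)
Definition bounded_op (p : R) (u : (nat -> R) -> (nat -> R)) : Prop :=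
  [/\ forall x, in_lp p x -> in_lp p (u x),
      forall (a b : R) x y, in_lp p x -> in_lp p y ->
        u (fun m => a * x m + b * y m) = (fun m => a * u x m + b * u y m)
    & exists C : R, forall x, in_lp p x -> lpnorm p (u x) <= C * lpnorm p x].

Definition opnorm (p : R) (u : (nat -> R) -> (nat -> R)) : R :=
  sup [set lpnorm p (u x) | x in [set x | in_lp p x /\ lpnorm p x <= 1]].

Definition op_series_converges_to (p : R) (a : nat -> R)
    (v : nat -> (nat -> R) -> (nat -> R)) (S : (nat -> R) -> (nat -> R)) : Prop :=
  (fun n => opnorm p (fun x m => S x m - \sum_(0 <= k < n) a k * v k x m))
    @ \oo --> 0.

End Lp.

(** Enumerating [N_k] as [idx k], the map [(k, i) |-> idx k i] is a bijection
    [nat * nat -> nat]; through it, [T a x] is the "tensor" sequence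
    [(a_k * u(x)_i)_(k,i)].  Sums of nonnegative double series factor, so
    [||T a x||_p = ||a||_p * ||u x||_p].  The remainder of [sum_k a_k u_k] after
    [n] terms is [T] applied to the tail of [a], hence its operator norm is at
    most [||tail_n a||_p * ||u||], which tends to [0].  Injectivity: reading
    [T a x] at the coordinate [idx k i], where [u(x)_i <> 0], recovers [a_k]. *)
From HB Require Import structures.
From mathcomp Require Import all_boot all_order all_algebra.
From mathcomp Require Import all_classical all_reals all_analysis.
Import Order.TTheory GRing.Theory Num.Theory.
Import numFieldNormedType.Exports.
Set Implicit Arguments. Unset Strict Implicit. Unset Printing Implicit Defensive.
Local Open Scope classical_set_scope.
Local Open Scope ring_scope.

Section Series.
Variable R : realType.
Implicit Types A B : nat -> R.

Lemma limn_series_ge0 A : (forall n, 0 <= A n) -> cvgn (series A) ->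
  0 <= limn (series A).
Proof.
move=> A0 cA; apply: limr_ge => //; near=> n.
by rewrite /series /=; apply: sumr_ge0.
Unshelve. all: by end_near.
Qed.

Lemma eseries_EFin_limn A : cvgn (series A) ->
  (\sum_(k <oo) (A k)%:E = (limn (series A))%:E)%E.
Proof.
move=> cA; rewrite -EFin_lim //; apply: congr_lim; apply/funext => n /=.
by rewrite sumEFin.
Qed.

Lemma cvgn_powR0 (q : R) (t : nat -> R) : 0 < q -> (forall n, 0 <= t n) ->
  t @ \oo --> 0 -> (fun n => t n `^ q) @ \oo --> 0.
Proof.
move=> q0 t0 /cvgrPdist_lt t_cvg0; apply/cvgrPdist_lt => e e0.
apply: filterS (t_cvg0 _ (powR_gt0 q^-1 e0)) => n.
rewrite !sub0r !normrN !ger0_norm ?powR_ge0 // => tn_lt.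
have := gt0_ltr_powR q0 _ _ tn_lt.
rewrite -powRrM mulVf ?gt_eqF // powRr1 ?(ltW e0) //; apply.
  by rewrite nnegrE.
by rewrite nnegrE powR_ge0.
Qed.

Definition tailseq n A k := if (n <= k)%N then A k else 0.

Lemma series_tailseq A n : cvgn (series A) ->
  series (tailseq n A) @ \oo --> limn (series A) - series A n.
Proof.
move=> cA; apply: cvg_trans (cvgB cA (cvg_cst (series A n))).
apply: near_eq_cvg; near=> N.
rewrite !fctE sub_series_geq; last by near: N; exact: nbhs_infty_ge.
by rewrite seriesEnat /tailseq /= -big_mkcond big_mkord big_geq_mkord.
Unshelve. all: by end_near.
Qed.

End Series.

Section Lp.
Variables (R : realType) (p : R).
Hypothesis p_gt0 : 0 < p.
Implicit Types (a x : nat -> R) (v : (nat -> R) -> (nat -> R)).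

Lemma series_powR_norm0 : series (fun k : nat => `|(0 : R)| `^ p) = fun=> 0.
Proof.
apply/funext => n; rewrite seriesEnat /=; apply: big1 => i _.
by rewrite normr0 powR0 // gt_eqF.
Qed.

Lemma in_lp0 : in_lp p (fun=> 0).
Proof. by rewrite /in_lp series_powR_norm0; exact: is_cvg_cst. Qed.

Lemma lpnorm0 : lpnorm p (fun=> 0) = 0.
Proof.
by rewrite /lpnorm series_powR_norm0 lim_cst // powR0 // invr_eq0 gt_eqF.
Qed.

Lemma opnorm_le v M : 0 <= M ->
  (forall x, in_lp p x -> lpnorm p (v x) <= M * lpnorm p x) ->
  0 <= opnorm p v <= M.
Proof.
move=> M0 vM; rewrite /opnorm; set S := [set _ | _ in _].
have S_v0 : S (lpnorm p (v (fun=> 0))).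
  by exists (fun=> 0) => //; split; [exact: in_lp0 | rewrite lpnorm0].
have ubS : ubound S M.
  move=> _ [x [xlp x_le1] <-]; apply: le_trans (vM x xlp) _.
  exact: ler_piMr.
apply/andP; split; last by apply: ge_sup => //; exists (lpnorm p (v (fun=> 0))).
apply: le_trans (sup_upper_bound _ S_v0); first exact: powR_ge0.
by split; [exists (lpnorm p (v (fun=> 0))) | exists M].
Qed.

Lemma bounded_op_ge0_bound v : bounded_op p v ->
  exists2 C, 0 <= C & forall x, in_lp p x -> lpnorm p (v x) <= C * lpnorm p x.
Proof.
case=> _ _ [C vC]; exists `|C| => // x xlp; apply: le_trans (vC x xlp) _.
by apply: ler_wpM2r; [exact: powR_ge0 | exact: ler_norm].
Qed.

Lemma powR_norm_tailseq n a :
  (fun k => `|tailseq n a k| `^ p) = tailseq n (fun k => `|a k| `^ p).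
Proof.
apply/funext => k; rewrite /tailseq; case: leqP => // _.
by rewrite normr0 powR0 // gt_eqF.
Qed.

Lemma in_lp_tailseq n a : in_lp p a -> in_lp p (tailseq n a).
Proof.
by move=> alp; rewrite /in_lp powR_norm_tailseq; apply/cvg_ex; eexists;
  exact: series_tailseq.
Qed.

Lemma lpnorm_tailseq_cvg0 a : in_lp p a ->
  (fun n => lpnorm p (tailseq n a)) @ \oo --> 0.
Proof.
move=> alp; apply: cvgn_powR0; first by rewrite invr_gt0.
  move=> n; apply: limn_series_ge0; last exact: in_lp_tailseq.
  by move=> k; exact: powR_ge0.
under eq_fun => n do
  rewrite powR_norm_tailseq (cvg_lim _ (series_tailseq (n := n) alp)) //.
rewrite -(subrr (limn (series (fun k => `|a k| `^ p)))).
exact: cvgB (cvg_cst _) alp.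
Qed.

End Lp.

Section Tensor.
Variable R : realType.
Variables (idx : nat -> nat -> nat) (g : nat -> nat * nat).
Hypotheses (gK : forall m, idx (g m).1 (g m).2 = m)
           (idxK : forall k i, g (idx k i) = (k, i)).
Implicit Types (A B a y : nat -> R).

Definition tensor a y m := a (g m).1 * y (g m).2.

Lemma nneseries_tensor A B : (forall n, 0 <= A n) -> (forall n, 0 <= B n) ->
  cvgn (series A) -> cvgn (series B) ->
  (\sum_(m <oo) (tensor A B m)%:E = (limn (series A) * limn (series B))%:E)%E.
Proof.
move=> A0 B0 cA cB.
have AB0 k i : (0 <= (A k * B i)%:E)%E by rewrite lee_fin mulr_ge0.
rewrite nneseries_esumT; last by move=> m; exact: AB0.
rewrite (reindex_esum setT setT (fun ki : nat * nat => idx ki.1 ki.2));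
  last first.
  split=> //; first by move=> [k i] [k' i'] _ _ /= /(congr1 g); rewrite !idxK.
  by move=> m _; exists (g m).
rewrite (_ : setT = setT `*`` (fun=> setT)); last by apply/seteqP; split.
rewrite (eq_esum (b := fun ki => (A ki.1 * B ki.2)%:E)); last first.
  by move=> [k i] _; rewrite /tensor idxK.
rewrite -(esum_esum (a := fun k i => (A k * B i)%:E)) //.
under eq_esum do rewrite -nneseries_esumT //.
rewrite -nneseries_esumT; last by move=> k; apply: nneseries_ge0.
transitivity (\sum_(k <oo) ((limn (series B))%:E * (A k)%:E))%E.
  apply: eq_eseriesr => k _; rewrite -eseries_EFin_limn // muleC.
  under eq_eseriesr do rewrite EFinM.
  by rewrite nneseriesZl // => i _; rewrite lee_fin.
rewrite nneseriesZl; last by move=> i _; rewrite lee_fin.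
by rewrite eseries_EFin_limn // -EFinM mulrC.
Qed.

Lemma cvgn_series_tensor A B : (forall n, 0 <= A n) -> (forall n, 0 <= B n) ->
  cvgn (series A) -> cvgn (series B) -> cvgn (series (tensor A B)).
Proof.
move=> A0 B0 cA cB; apply: nnseries_is_cvg; first by move=> m; exact: mulr_ge0.
by rewrite nneseries_tensor // ltry.
Qed.

Lemma limn_series_tensor A B : (forall n, 0 <= A n) -> (forall n, 0 <= B n) ->
  cvgn (series A) -> cvgn (series B) ->
  limn (series (tensor A B)) = limn (series A) * limn (series B).
Proof.
move=> A0 B0 cA cB; apply/EFin_inj.
by rewrite -eseries_EFin_limn ?nneseries_tensor //; exact: cvgn_series_tensor.
Qed.

Section TensorLp.
Variable p : R.

Lemma powR_norm_tensor a y :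
  (fun m => `|tensor a y m| `^ p) =
  tensor (fun k => `|a k| `^ p) (fun i => `|y i| `^ p).
Proof. by apply/funext => m; rewrite /tensor normrM powRM. Qed.

Lemma in_lp_tensor a y : in_lp p a -> in_lp p y -> in_lp p (tensor a y).
Proof.
by move=> alp ylp; rewrite /in_lp powR_norm_tensor;
  apply: cvgn_series_tensor => // n; exact: powR_ge0.
Qed.

Lemma lpnorm_tensor a y : in_lp p a -> in_lp p y ->
  lpnorm p (tensor a y) = lpnorm p a * lpnorm p y.
Proof.
move=> alp ylp; have powR_norm_ge0 (z : nat -> R) n : 0 <= `|z n| `^ p.
  exact: powR_ge0.
rewrite /lpnorm powR_norm_tensor limn_series_tensor // powRM //;
  exact: limn_series_ge0.
Qed.

End TensorLp.

Lemma tensor_injl a b y i : y i != 0 -> tensor a y = tensor b y -> a = b.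
Proof.
move=> yi0 ab; apply/funext => k.
by have := congr1 (fun z => z (idx k i)) ab; rewrite /tensor idxK; exact: mulIf.
Qed.

Section Embedding.
Variables (p : R) (u : (nat -> R) -> (nat -> R))
          (uk : nat -> (nat -> R) -> (nat -> R)).
Hypotheses (p_gt0 : 0 < p) (u_bounded : bounded_op p u).
Hypothesis uk_idx : forall k x i, in_lp p x -> uk k x (idx k i) = u x i.
Hypothesis uk_out :
  forall k x m, in_lp p x -> (forall i, idx k i <> m) -> uk k x m = 0.

Lemma tensor_sub_partial_sum a x n : in_lp p x ->
  (fun m => tensor a (u x) m - \sum_(0 <= k < n) a k * uk k x m) =
  tensor (tailseq n a) (u x).
Proof.
move=> xlp; apply/funext => m; rewrite -[m]gK; move: (g m) => [k i] /=.
rewrite /tensor idxK /=.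
rewrite (eq_big_nat _ _ (F2 := fun k' => if k' == k then a k * u x i else 0));
  last first.
  move=> k' _; case: eqP => [->|k'k]; first by rewrite uk_idx.
  rewrite uk_out ?mulr0 // => j /(congr1 g); rewrite !idxK => -[/k'k []].
rewrite -(big_mkcond (fun j => j == k)) big_nat1_eq /tailseq leq0n /=.
by case: leqP => _; [rewrite subr0 | rewrite subrr mul0r].
Qed.

Lemma bounded_op_tensor a : in_lp p a -> bounded_op p (fun x => tensor a (u x)).
Proof.
move=> alp; have [ulp ulin _] := u_bounded.
have [C _ uC] := bounded_op_ge0_bound u_bounded.
split.
- by move=> x xlp; exact: in_lp_tensor alp (ulp x xlp).
- move=> s t x y xlp ylp; apply/funext => m.
  by rewrite /tensor ulin //= mulrDr; congr (_ + _); exact: mulrCA.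
- exists (lpnorm p a * C) => x xlp.
  rewrite (lpnorm_tensor alp (ulp x xlp)) -mulrA.
  by apply: ler_wpM2l; [exact: powR_ge0 | exact: uC].
Qed.

Lemma tensor_series_converges a : in_lp p a ->
  op_series_converges_to p a uk (fun x => tensor a (u x)).
Proof.
move=> alp; have [ulp _ _] := u_bounded.
have [C C0 uC] := bounded_op_ge0_bound u_bounded.
apply: (squeeze_cvgr (f := fun=> 0) (h := fun n => lpnorm p (tailseq n a) * C)).
- apply: nearW => n; apply: opnorm_le => //.
    by rewrite mulr_ge0 ?powR_ge0.
  move=> x xlp; rewrite tensor_sub_partial_sum //.
  rewrite (lpnorm_tensor (in_lp_tailseq p_gt0 alp) (ulp x xlp)) -mulrA.
  by apply: ler_wpM2l; [exact: powR_ge0 | exact: uC].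
- exact: cvg_cst.
- by rewrite -(mul0r C); apply: cvgMr_tmp; exact: lpnorm_tailseq_cvg0.
Qed.

End Embedding.

End Tensor.

Theorem lemma2p1 (R : realType) (p : R) (hp : 0 < p)
  (u : (nat -> R) -> (nat -> R))
  (hu : bounded_op p u)
  (hu0 : exists x, in_lp p x /\ u x <> (fun _ => 0))
  (idx : nat -> nat -> nat)
  (* idx k i = n^(k)_i : increasing enumeration of N_k *)
  (hinc : forall k i j, (i < j)%N -> (idx k i < idx k j)%N)
  (* the N_k are pairwise disjoint and cover N *)
  (hpart : forall m : nat, exists! ki : nat * nat, idx ki.1 ki.2 = m)
  (uk : nat -> (nat -> R) -> (nat -> R))
  (huk1 : forall k x i, in_lp p x -> uk k x (idx k i) = u x i)
  (huk2 : forall k x m, in_lp p x -> (forall i, idx k i <> m) -> uk k x m = 0) :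
  exists T : (nat -> R) -> ((nat -> R) -> (nat -> R)),
    (* well defined: the series converges in L(ell_p; ell_p) to T a *)
    (forall a, in_lp p a ->
       bounded_op p (T a) /\ op_series_converges_to p a uk (T a)) /\
    (* linear *)
    (forall (s t : R) a b, in_lp p a -> in_lp p b ->
       forall x, in_lp p x ->
         T (fun k => s * a k + t * b k) x = (fun m => s * T a x m + t * T b x m)) /\
    (* injective *)
    (forall a b, in_lp p a -> in_lp p b ->
       (forall x, in_lp p x -> T a x = T b x) -> a = b).
Proof.
have /choice [g gK] : forall m, exists ki : nat * nat, idx ki.1 ki.2 = m.
  by move=> m; have [ki [? _]] := hpart m; exists ki.
have idxK k i : g (idx k i) = (k, i).
  have [ki [_ ki_uniq]] := hpart (idx k i).
  by rewrite -(ki_uniq _ (gK _)); exact: ki_uniq (k, i) erefl.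
exists (fun a x => tensor g a (u x)); split; [|split].
- move=> a alp; split; first exact: bounded_op_tensor.
  exact: (tensor_series_converges gK idxK).
- by move=> s t a b _ _ x _; apply/funext => m; rewrite /tensor mulrDl !mulrA.
- move=> a b _ _ Tab; have [x [xlp ux_neq0]] := hu0.
  have [i /eqP uxi] : exists i, u x i <> 0.
    by apply/existsNP => ux0; apply: ux_neq0; apply/funext.
  exact: (tensor_injl idxK uxi (Tab x xlp)).
Qed.
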